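(* Let $r\ge1$. The assignment \[ (i)\mapsto e_i,\qquad (i-1|i)\mapsto c_i^{\leftarrow},\qquad (i+1|i)\mapsto c_{i+1}^{\rightarrow},\qquad \theta\mapsto \omega \] defines an isomorphism of $\mathbb Z\times\mathbb Z^2$-graded algebras $\mathcal A^!_r\cong T_1^{\lambda,r}$. Moreover it induces isomorphisms of dg-algebras $(\mathcal A^!_r,0)\cong(T_1^{\lambda,r},0)$ and $(\mathcal A^!_r,d)\cong(T_1^{\lambda,r},d_1)$.
   Context: $\Bbbk$ is a field. $\mathcal Q_r$ is the quiver with vertices $0,1,\dots,r$, arrows $i|i+1:i\to i+1$ and $i+1|i:i+1\to i$ for $0\le i<r$, and a loop $\theta$ at $0$; $(i_1|\cdots|i_n)$ denotes the path through $i_1,\dots,i_n$ and $(i)$ the constant path. $\mathcal A^!_r$ is the quotient of the path algebra $\Bbbk\mathcal Q_r$ by $(i|i-1|i)=(i|i+1|i)$ for $0<i<r$, $\theta(0|1|0)=(0|1|0)\theta$, $\theta^2=0$; it is graded by (homological, $q$, $\lambda$)-degrees $\deg(i|i\pm1)=(0,1,0)$, $\deg\theta=(1,0,2)$. The differential $d$ on $\mathcal A^!_r$ is $d(\theta)=(0|1|0)$ and $d=0$ on the other generators. $T_1^{\lambda,r}$ is the dg-enhanced KLRW algebra with one black strand and $r$ red strands labelled $1$: braid-like diagrams (bottom to top; product = stacking) with a leftmost vertical blue strand $\lambda$, $r$ non-crossing red strands and one black strand which may cross red strands, carry dots, and, when it is immediately right of the blue strand, be nailed on the blue strand (nail: homological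 degree $1$), subject to: dots slide through black/red crossings; a black/red double crossing equals one dot on the black strand; a nailed strand's dot can slide through the nail; two consecutive nails on the strand give $0$. $(q,\lambda)$-degrees: dot $(2,0)$, black/red crossing $(1,0)$, nail $(0,2)$. The differential $d_1$ sends the nail to a dot and is zero on nail-free diagrams (graded Leibniz rule). In $T_1^{\lambda,r}$: $e_i$ is the idempotent with the black strand immediately right of the $i$-th red strand ($i=0$: immediately right of blue); $c_i^{\leftarrow}$ ($1\le i\le r$) is the diagram in which the black strand starts (bottom) right of the $i$-th red strand and ends (top) left of it, crossing it once; $c_{i+1}^{\rightarrow}$ ($0\le i<r$) is the diagram in which the black strand starts right of the $i$-th red strand and ends right of the $(i+1)$-th, crossing it once; $\omega$ is the nail on the black strand in idempotent $e_0$. *)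

From HB Require Import structures.
From mathcomp Require Import all_boot all_order all_algebra.
Set Implicit Arguments. Unset Strict Implicit. Unset Printing Implicit Defensive.
Import Order.TTheory GRing.Theory Num.Theory.
Local Open Scope ring_scope.

(* Z x Z^2 degrees: ((homological, q), lambda) *)
Definition tdeg := (int * int * int)%type.

Section Presentations.
Variable k : fieldType.

Definition is_alg_hom (B C : algType k) (f : B -> C) : Prop :=
  (forall (c : k) (x y : B), f (c *: x + y) = c *: f x + f y) /\
  f 1 = 1 /\ (forall x y : B, f (x * y) = f x * f y).

Definition word_val (B : algType k) (G : Type) (g : G -> B) (w : seq G) : B :=
  \prod_(s <- w) g s.

Definition wdeg (G : Type) (deg : G -> tdeg) (w : seq G) : tdeg :=
  foldr (fun s acc => (((deg s).1.1 + acc.1.1, (deg s).1.2 + acc.1.2),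
                        (deg s).2 + acc.2)) ((0, 0), 0) w.

Definition lin_comb_of (B : algType k) (G : Type) (g : G -> B)
    (P : seq G -> Prop) (b : B) : Prop :=
  exists s : seq (k * seq G),
    (forall p, (exists s1 s2, s = s1 ++ p :: s2) -> P p.2) /\
    b = \sum_(p <- s) p.1 *: word_val g p.2.

Definition spanned (B : algType k) (G : Type) (g : G -> B) : Prop :=
  forall b : B, lin_comb_of g (fun _ => True) b.

Definition homog_piece (B : algType k) (G : Type) (g : G -> B)
    (deg : G -> tdeg) (n : tdeg) (b : B) : Prop :=
  lin_comb_of g (fun w => wdeg deg w = n) b.

(* (B, g) is the k-algebra presented by generators G and relations rel:
   the relations hold, the generators generate, and every family in any
   k-algebra satisfying the relations extends to an algebra morphism *)
Definition presents (G : Type) (rel : forall C : algType k, (G -> C) -> Prop)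
    (B : algType k) (g : G -> B) : Prop :=
  rel B g /\ spanned g /\
  (forall (C : algType k) (h : G -> C), rel C h ->
     exists f : B -> C, is_alg_hom f /\ forall s, f (g s) = h s).

Definition graded_derivation (B : algType k) (G : Type) (g : G -> B)
    (deg : G -> tdeg) (d : B -> B) : Prop :=
  (forall (c : k) (x y : B), d (c *: x + y) = c *: d x + d y) /\
  (forall (n : tdeg) (x y : B), homog_piece g deg n x ->
     d (x * y) = d x * y + (-1) ^+ (absz n.1.1) * (x * d y)).

End Presentations.

(* AV i   = constant path (i),             i = 0..r
   AR i   = arrow (i|i+1) : i -> i+1,      i = 0..r-1
   AL i   = arrow (i+1|i) : i+1 -> i,      i = 0..r-1
   ATh    = loop theta at 0.
   Path convention: (i|j)(j|l) = (i|j|l), so (i|j) = (i)(i|j)(j). *)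
Inductive AGen (r : nat) : Type :=
| AV of 'I_r.+1 | AR of 'I_r | AL of 'I_r | ATh.
Arguments ATh {r}.

Definition vlo (r : nat) (i : 'I_r) : 'I_r.+1 := widen_ord (leqnSn r) i.
Definition vhi (r : nat) (i : 'I_r) : 'I_r.+1 := lift ord0 i.

Definition relA (k : fieldType) (r : nat) (C : algType k) (x : AGen r -> C) : Prop :=
  (* path algebra of Q_r *)
  (forall i j : 'I_r.+1, x (AV i) * x (AV j) = if i == j then x (AV i) else 0) /\
  (\sum_(i < r.+1) x (AV i) = 1) /\
  (forall i : 'I_r, x (AR i) = x (AV (vlo i)) * x (AR i) * x (AV (vhi i))) /\
  (forall i : 'I_r, x (AL i) = x (AV (vhi i)) * x (AL i) * x (AV (vlo i))) /\
  (x ATh = x (AV ord0) * x ATh * x (AV ord0)) /\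
  (* (v|v-1|v) = (v|v+1|v) for 0 < v < r  (here v = j = i+1) *)
  (forall i j : 'I_r, val j = (val i).+1 ->
     x (AL i) * x (AR i) = x (AR j) * x (AL j)) /\
  (forall i : 'I_r, val i = 0%N ->
     x ATh * (x (AR i) * x (AL i)) = (x (AR i) * x (AL i)) * x ATh) /\
  (x ATh * x ATh = 0).

Definition degA (r : nat) (s : AGen r) : tdeg :=
  match s with
  | AV _ => ((0, 0), 0)
  | AR _ => ((0, 1), 0)
  | AL _ => ((0, 1), 0)
  | ATh => ((1, 0), 2)
  end.

(* Diagrams read bottom to top; product x * y = x stacked ON TOP of y.
   TE v   = idempotent e_v (black strand immediately right of the v-th red strand,
            v = 0: immediately right of the blue strand),   v = 0..r
   TCl i  = c_{i+1}^<- : from e_{i+1} (bottom) to e_i (top), i = 0..r-1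
   TCr i  = c_{i+1}^-> : from e_i (bottom) to e_{i+1} (top), i = 0..r-1
   TY v   = dot on the black strand in e_v
   TOm    = nail omega on the black strand in e_0 *)
Inductive TGen (r : nat) : Type :=
| TE of 'I_r.+1 | TCl of 'I_r | TCr of 'I_r | TY of 'I_r.+1 | TOm.
Arguments TOm {r}.

Definition relT (k : fieldType) (r : nat) (C : algType k) (x : TGen r -> C) : Prop :=
  (forall i j : 'I_r.+1, x (TE i) * x (TE j) = if i == j then x (TE i) else 0) /\
  (\sum_(i < r.+1) x (TE i) = 1) /\
  (forall i : 'I_r, x (TCl i) = x (TE (vlo i)) * x (TCl i) * x (TE (vhi i))) /\
  (forall i : 'I_r, x (TCr i) = x (TE (vhi i)) * x (TCr i) * x (TE (vlo i))) /\
  (forall v : 'I_r.+1, x (TY v) = x (TE v) * x (TY v) * x (TE v)) /\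
  (x TOm = x (TE ord0) * x TOm * x (TE ord0)) /\
  (* dots slide through black/red crossings *)
  (forall i : 'I_r, x (TY (vlo i)) * x (TCl i) = x (TCl i) * x (TY (vhi i))) /\
  (forall i : 'I_r, x (TY (vhi i)) * x (TCr i) = x (TCr i) * x (TY (vlo i))) /\
  (* black/red double crossing = dot *)
  (forall i : 'I_r, x (TCl i) * x (TCr i) = x (TY (vlo i))) /\
  (forall i : 'I_r, x (TCr i) * x (TCl i) = x (TY (vhi i))) /\
  (* the dot slides through the nail *)
  (x TOm * x (TY ord0) = x (TY ord0) * x TOm) /\
  (x TOm * x TOm = 0).

Definition degT (r : nat) (s : TGen r) : tdeg :=
  match s with
  | TE _ => ((0, 0), 0)
  | TCl _ => ((0, 1), 0)
  | TCr _ => ((0, 1), 0)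
  | TY _ => ((0, 2), 0)
  | TOm => ((1, 0), 2)
  end.

From HB Require Import structures.
From mathcomp Require Import all_boot all_order all_algebra.
Set Implicit Arguments. Unset Strict Implicit. Unset Printing Implicit Defensive.
Import GRing.Theory.
Local Open Scope ring_scope.

(* Sending (i), (i|i+1),
   (i+1|i), theta to e_i, c^<-, c^->, omega respects the relations of A^!_r, and
   conversely sending the dot y_v to the 2-cycle at v respects those of
   T_1^{lambda,r}; the two universal maps are inverse on generators, hence
   mutually inverse.  They send generators to words of the same degree, so they
   match the homogeneous pieces, and d(theta) = (0|1|0) goes to c_1^<- c_1^-> =
   y_0 = d_1(omega), so by the Leibniz rule the differentials correspond. *)

Section Presentations.
Variable k : fieldType.
Implicit Types B C : algType k.

Lemma linear_map0 B C (f : B -> C) : linear f -> f 0 = 0.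
Proof. by move=> /zmod_morphism_linear f_add; rewrite -(subrr (0 : B)) f_add subrr. Qed.

Lemma linear_mapD B C (f : B -> C) x y : linear f -> f (x + y) = f x + f y.
Proof. by move=> f_lin; rewrite (GRing.semilinear_linear f_lin).2. Qed.

Lemma linear_mapN B C (f : B -> C) x : linear f -> f (- x) = - f x.
Proof.
by move=> f_lin; rewrite -sub0r (zmod_morphism_linear f_lin) linear_map0 ?sub0r.
Qed.

Lemma linear_map_sumZ B C (f : B -> C) (I : Type) (s : seq I) (c : I -> k) (X : I -> B) :
  linear f -> f (\sum_(p <- s) c p *: X p) = \sum_(p <- s) c p *: f (X p).
Proof.
move=> f_lin; rewrite (big_morph f (fun x y => linear_mapD x y f_lin) (linear_map0 f_lin)).
by apply: eq_bigr => p _; rewrite (scalable_linear f_lin).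
Qed.

Lemma linear_eq_on_span B C G (g : G -> B) (f1 f2 : B -> C) :
  spanned g -> linear f1 -> linear f2 ->
  (forall w, f1 (word_val g w) = f2 (word_val g w)) -> f1 =1 f2.
Proof.
move=> g_span f1_lin f2_lin f12 x; have [s [_ ->]] := g_span x.
by rewrite !linear_map_sumZ //; apply: eq_bigr => p _; rewrite f12.
Qed.

Lemma alg_hom_comp B C (D : algType k) (f : B -> C) (h : C -> D) :
  is_alg_hom f -> is_alg_hom h -> is_alg_hom (h \o f).
Proof.
move=> [f_lin [f1 fM]] [h_lin [h1 hM]]; split; last split.
- by move=> c x y /=; rewrite f_lin h_lin.
- by rewrite /= f1 h1.
- by move=> x y /=; rewrite fM hM.
Qed.

Lemma alg_hom_sign B C (f : B -> C) n x :
  is_alg_hom f -> f ((-1) ^+ n * x) = (-1) ^+ n * f x.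
Proof.
move=> f_hom.
case: f_hom => f_lin _.
by rewrite -signr_odd mulr_sign -signr_odd mulr_sign; case: (odd n); rewrite ?linear_mapN.
Qed.

Lemma alg_hom_word_val B C G (g : G -> B) (h : G -> C) (f : B -> C) :
  is_alg_hom f -> (forall s, f (g s) = h s) -> forall w, f (word_val g w) = word_val h w.
Proof. by case=> _ [f1 fM] fg w; rewrite /word_val (big_morph f fM f1); apply: eq_bigr. Qed.

Lemma alg_hom_id B G (g : G -> B) (f : B -> B) :
  spanned g -> is_alg_hom f -> (forall s, f (g s) = g s) -> f =1 id.
Proof.
move=> g_span f_hom fg; apply: (linear_eq_on_span g_span f_hom.1) => // w.
exact: alg_hom_word_val.
Qed.

Lemma word_val1 B G (g : G -> B) s : word_val g [:: s] = g s.
Proof. by rewrite /word_val big_seq1. Qed.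

Lemma word_val2 B G (g : G -> B) s1 s2 : word_val g [:: s1; s2] = g s1 * g s2.
Proof. by rewrite /word_val big_cons big_seq1. Qed.

Definition subst_word (G G' : Type) (F : G -> seq G') (w : seq G) : seq G' :=
  flatten (map F w).

Lemma word_val_subst B G G' (g : G' -> B) (F : G -> seq G') w :
  word_val g (subst_word F w) = word_val (word_val g \o F) w.
Proof. by rewrite /word_val big_flatten big_map. Qed.

Lemma wdeg_sum (G : Type) (deg : G -> tdeg) w : wdeg deg w = \sum_(s <- w) deg s.
Proof. by elim: w => [|s w IH]; rewrite ?big_nil ?big_cons //= IH. Qed.

Lemma wdeg1 (G : Type) (deg : G -> tdeg) s : wdeg deg [:: s] = deg s.
Proof. by rewrite wdeg_sum big_seq1. Qed.

Lemma wdeg_subst (G G' : Type) (deg : G -> tdeg) (deg' : G' -> tdeg) (F : G -> seq G') :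
  (forall s, wdeg deg' (F s) = deg s) -> forall w, wdeg deg' (subst_word F w) = wdeg deg w.
Proof.
move=> degF w; rewrite !wdeg_sum big_flatten big_map.
by apply: eq_bigr => s _; rewrite -wdeg_sum.
Qed.

Lemma map_eq_cat_cons (I J : Type) (F : I -> J) (s : seq I) s1 p s2 :
  map F s = s1 ++ p :: s2 -> exists s1' s2' q, s = s1' ++ q :: s2' /\ p = F q.
Proof.
elim: s1 s => [|x s1 IH] [|y s] //= [].
  by move=> <- _; exists [::], s, y.
by move=> _ /IH [s1' [s2' [q [-> ->]]]]; exists (y :: s1'), s2', q.
Qed.

Lemma homog_piece_word_val B G (g : G -> B) (deg : G -> tdeg) w :
  homog_piece g deg (wdeg deg w) (word_val g w).
Proof.
exists [:: (1, w)]; split; last by rewrite big_seq1 scale1r.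
by move=> p [[|x [|y s1]] [s2 /= E]]; case: E => // <-.
Qed.

Lemma homog_piece_gen B G (g : G -> B) (deg : G -> tdeg) s :
  homog_piece g deg (deg s) (g s).
Proof. by rewrite -wdeg1 -word_val1; apply: homog_piece_word_val. Qed.

Lemma alg_hom_homog_piece B C G G' (g : G -> B) (g' : G' -> C)
    (deg : G -> tdeg) (deg' : G' -> tdeg) (F : G -> seq G') (f : B -> C) :
  is_alg_hom f -> (forall s, f (g s) = word_val g' (F s)) ->
  (forall s, wdeg deg' (F s) = deg s) ->
  forall n b, homog_piece g deg n b -> homog_piece g' deg' n (f b).
Proof.
move=> f_hom fg degF n b [s [s_deg ->]].
exists [seq (p.1, subst_word F p.2) | p <- s]; split.
  move=> q [s1 [s2 E]]; have [s1' [s2' [p [s_eq ->]]]] := map_eq_cat_cons E.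
  by rewrite /= (wdeg_subst degF) s_deg //; exists s1', s2'.
rewrite linear_map_sumZ ?big_map; last exact: f_hom.1.
by apply: eq_bigr => p _; rewrite word_val_subst (alg_hom_word_val f_hom fg).
Qed.

Lemma graded_derivation1 B G (g : G -> B) (deg : G -> tdeg) (d : B -> B) :
  graded_derivation g deg d -> d 1 = 0.
Proof.
case=> _ d_leib; have := d_leib _ _ 1 (homog_piece_word_val g deg [::]).
by rewrite /word_val big_nil expr0 !mul1r mulr1 => /eqP; rewrite addrC -subr_eq subrr => /eqP.
Qed.

Lemma alg_hom_derivation B C G G' (g : G -> B) (g' : G' -> C)
    (deg : G -> tdeg) (deg' : G' -> tdeg) (F : G -> G') (f : B -> C)
    (dB : B -> B) (dC : C -> C) :
  spanned g -> is_alg_hom f -> (forall s, f (g s) = g' (F s)) ->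
  (forall s, deg' (F s) = deg s) ->
  graded_derivation g deg dB -> graded_derivation g' deg' dC ->
  (forall s, f (dB (g s)) = dC (g' (F s))) -> forall x, f (dB x) = dC (f x).
Proof.
move=> g_span f_hom fg degF dB_der dC_der fd.
have [f_lin [f1 fM]] := f_hom; have [dB_lin dB_leib] := dB_der; have [dC_lin dC_leib] := dC_der.
apply: (@linear_eq_on_span _ _ _ g (f \o dB) (dC \o f)) => // [c x y | c x y | w] /=.
- by rewrite dB_lin f_lin.
- by rewrite f_lin dC_lin.
elim: w => [|s w IH]; first by rewrite /word_val big_nil f1 (graded_derivation1 dB_der)
  (graded_derivation1 dC_der) linear_map0.
rewrite /word_val !big_cons -/(word_val g w) (dB_leib _ _ _ (homog_piece_gen g deg s)).
rewrite fM fg (dC_leib _ _ _ (homog_piece_gen g' deg' (F s))) degF.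
by rewrite linear_mapD // alg_hom_sign // !fM fg IH fd.
Qed.

End Presentations.

Lemma corner_mul (R : pzRingType) (e f u w : R) :
  e * e = e -> u = e * u * f -> w = f * w * e -> e * (u * w) * e = u * w.
Proof.
move=> ee u_ef w_fe.
have eu : e * u = u by rewrite {1}u_ef !mulrA ee -u_ef.
have we : w * e = w by rewrite {1}w_fe -mulrA ee -w_fe.
by rewrite mulrA eu -mulrA we.
Qed.

Lemma vhiE (r : nat) (i : 'I_r) : vhi i = i.+1 :> nat.
Proof. exact: lift0. Qed.

Lemma vertex_lo_or_hi (r : nat) (v : 'I_r.+2) :
  exists i : 'I_r.+1, v = vlo i \/ v = vhi i.
Proof.
have [v_lt | v_ge] := ltnP v r.+1.
  by exists (inord v); left; apply: ord_inj; rewrite /= inordK.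
exists ord_max; right; apply: ord_inj; rewrite vhiE.
by apply/eqP; rewrite eqn_leq v_ge -ltnS ltn_ord.
Qed.

Definition klrw_of_quiver_gen (r : nat) (s : AGen r) : TGen r :=
  match s with
  | AV i => TE i
  | AR i => TCl i
  | AL i => TCr i
  | ATh => TOm
  end.

(* The dot y_v goes to the 2-cycle (v|v+1|v), or to (r|r-1|r) at the last vertex;
   for 0 < v < r the zigzag relation identifies the two choices. *)
Definition dot_path (r : nat) (v : 'I_r.+2) : seq (AGen r.+1) :=
  if (v < r.+1)%N then [:: AR (inord v); AL (inord v)] else [:: AL ord_max; AR ord_max].

Definition quiver_of_klrw_gen (r : nat) (s : TGen r.+1) : seq (AGen r.+1) :=
  match s with
  | TE i => [:: AV i]
  | TCl i => [:: AR i]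
  | TCr i => [:: AL i]
  | TY v => dot_path v
  | TOm => [:: ATh]
  end.

Lemma degT_klrw_of_quiver (r : nat) (s : AGen r) : degT (klrw_of_quiver_gen s) = degA s.
Proof. by case: s. Qed.

Lemma wdeg_quiver_of_klrw (r : nat) (s : TGen r.+1) :
  wdeg (@degA r.+1) (quiver_of_klrw_gen s) = degT s.
Proof. by case: s => [i|i|i|v|] //; rewrite /= /dot_path; case: ifP. Qed.

Lemma relA_klrw (k : fieldType) (r : nat) (C : algType k) (x : TGen r -> C) :
  relT x -> relA (x \o @klrw_of_quiver_gen r).
Proof.
case=> [xE [x1 [xCl [xCr [_ [xOm [_ [_ [xClCr [xCrCl [xOmY xOm2]]]]]]]]]]].
do 5 (split; first by []); split.
  move=> i j ji /=; rewrite xCrCl xClCr; congr (x (TY _)).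
  by apply: ord_inj; rewrite vhiE; apply/esym.
split; last exact: xOm2.
by move=> i i0 /=; rewrite xClCr (_ : vlo i = ord0) //; apply: ord_inj.
Qed.

Section KLRWToQuiver.
Variables (k : fieldType) (r : nat) (C : algType k) (x : AGen r.+1 -> C).

Lemma dot_path_vlo (i : 'I_r.+1) : word_val x (dot_path (vlo i)) = x (AR i) * x (AL i).
Proof.
rewrite /dot_path /= ltn_ord word_val2.
suff -> : inord (vlo i) = i by [].
by apply/val_inj; rewrite /= inordK.
Qed.

Lemma dot_path_vhi (i : 'I_r.+1) :
  relA x -> word_val x (dot_path (vhi i)) = x (AL i) * x (AR i).
Proof.
case=> [_ [_ [_ [_ [_ [xLR _]]]]]]; rewrite /dot_path vhiE.
case: ifP => [i_lt | /negbT]; rewrite word_val2.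
  by rewrite (xLR i (inord i.+1)) //= inordK.
rewrite -leqNgt ltnS => i_ge; suff -> : i = ord_max by [].
by apply: ord_inj; apply/eqP; rewrite eqn_leq i_ge andbT -ltnS ltn_ord.
Qed.

Lemma relT_quiver : relA x -> relT (fun s => word_val x (quiver_of_klrw_gen s)).
Proof.
move=> xA; have [xV [x1 [xR [xL [xTh [_ [xThR xTh2]]]]]]] := xA.
rewrite /relT /= !word_val1.
split; first by move=> i j; rewrite !word_val1.
split; first by rewrite -x1; apply: eq_bigr => i _; rewrite word_val1.
split; first by move=> i; rewrite !word_val1.
split; first by move=> i; rewrite !word_val1.
split.
  move=> v; rewrite !word_val1; have [i [-> | ->]] := vertex_lo_or_hi v.
    by rewrite dot_path_vlo; symmetry; apply: corner_mul; rewrite ?xV ?eqxx.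
  by rewrite dot_path_vhi //; symmetry; apply: corner_mul; rewrite ?xV ?eqxx.
split; first by [].
split; first by move=> i; rewrite word_val1 dot_path_vlo dot_path_vhi // !mulrA.
split; first by move=> i; rewrite word_val1 dot_path_vlo dot_path_vhi // !mulrA.
split; first by move=> i; rewrite !word_val1 dot_path_vlo.
split; first by move=> i; rewrite !word_val1 dot_path_vhi.
have -> : ord0 = vlo (ord0 : 'I_r.+1) by apply: ord_inj.
by split=> //; rewrite dot_path_vlo; apply: xThR.
Qed.

Lemma quiver_of_klrw_of_quiver (s : AGen r.+1) :
  word_val x (quiver_of_klrw_gen (klrw_of_quiver_gen s)) = x s.
Proof. by case: s => *; rewrite word_val1. Qed.

End KLRWToQuiver.

Lemma klrw_of_quiver_of_klrw (k : fieldType) (r : nat) (C : algType k)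
    (y : TGen r.+1 -> C) (s : TGen r.+1) :
  relT y -> word_val (y \o @klrw_of_quiver_gen r.+1) (quiver_of_klrw_gen s) = y s.
Proof.
move=> yT; have [_ [_ [_ [_ [_ [_ [_ [_ [yClCr [yCrCl _]]]]]]]]]] := yT.
case: s => [i|i|i|v|] /=; rewrite ?word_val1 //.
have [i [-> | ->]] := vertex_lo_or_hi v; first by rewrite dot_path_vlo /= yClCr.
by rewrite dot_path_vhi /= ?yCrCl //; apply: relA_klrw.
Qed.

Theorem proposition7p2 (k : fieldType) (r : nat) (hr : (0 < r)%N)
    (A : algType k) (a : AGen r -> A) (HA : presents (@relA k r) a)
    (T : algType k) (t : TGen r -> T) (HT : presents (@relT k r) t) :
  exists phi : A -> T,
    [/\ is_alg_hom phi /\ bijective phi,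
        (forall i, phi (a (AV i)) = t (TE i)) /\
        (forall i, phi (a (AR i)) = t (TCl i)) /\
        (forall i, phi (a (AL i)) = t (TCr i)) /\
        phi (a ATh) = t TOm,
        (forall (n : tdeg) (x : A),
           homog_piece a (@degA r) n x <-> homog_piece t (@degT r) n (phi x)),
        (forall x : A, phi ((fun _ : A => 0) x) = (fun _ : T => 0) (phi x)) &
        (forall (dA : A -> A) (dT : T -> T),
           graded_derivation a (@degA r) dA ->
           (forall i, dA (a (AV i)) = 0) -> (forall i, dA (a (AR i)) = 0) ->
           (forall i, dA (a (AL i)) = 0) ->
           dA (a ATh) = a (AR (Ordinal hr)) * a (AL (Ordinal hr)) ->
           graded_derivation t (@degT r) dT ->
           (forall i, dT (t (TE i)) = 0) -> (forall i, dT (t (TCl i)) = 0) ->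
           (forall i, dT (t (TCr i)) = 0) -> (forall i, dT (t (TY i)) = 0) ->
           dT (t TOm) = t (TY ord0) ->
           forall x : A, phi (dA x) = dT (phi x))].
Proof.
case: r hr a HA t HT => [//|r] hr a [a_rel [a_span a_univ]] t [t_rel [t_span t_univ]].
have [phi [phi_hom phiE]] := a_univ _ _ (relA_klrw t_rel).
have [psi [psi_hom psiE]] := t_univ _ _ (relT_quiver a_rel).
have phiK : cancel phi psi.
  apply: (alg_hom_id a_span (alg_hom_comp phi_hom psi_hom)) => s /=.
  by rewrite phiE psiE quiver_of_klrw_of_quiver.
have psiK : cancel psi phi.
  apply: (alg_hom_id t_span (alg_hom_comp psi_hom phi_hom)) => s /=.
  by rewrite psiE (alg_hom_word_val phi_hom phiE) klrw_of_quiver_of_klrw.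
have phi_word s : phi (a s) = word_val t [:: klrw_of_quiver_gen s].
  by rewrite word_val1 phiE.
have deg_word s : wdeg (@degT r.+1) [:: klrw_of_quiver_gen s] = degA s.
  by rewrite wdeg1 degT_klrw_of_quiver.
exists phi; split.
- by split=> //; exists psi.
- by do !split.
- move=> n x; split; first exact: (alg_hom_homog_piece phi_hom phi_word deg_word).
  by move/(alg_hom_homog_piece psi_hom psiE (@wdeg_quiver_of_klrw r)); rewrite phiK.
- by move=> x; apply/linear_map0/phi_hom.1.
move=> dA dT dA_der dAV dAR dAL dATh dT_der dTE dTCl dTCr _ dTOm.
apply: (alg_hom_derivation (g' := t) (F := @klrw_of_quiver_gen _) a_span phi_hom phiE
  (@degT_klrw_of_quiver _) dA_der dT_der).
have [_ [_ [_ [_ [_ [_ [_ [_ [tClCr _]]]]]]]]] := t_rel.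
case=> [i|i|i|] /=; rewrite ?dAV ?dAR ?dAL ?dTE ?dTCl ?dTCr ?linear_map0 //; try exact: phi_hom.1.
rewrite dATh dTOm phi_hom.2.2 !phiE /= tClCr; congr (t (TY _)); exact: ord_inj.
Qed.
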